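(* For any $J\in\mathbb{N}^+$, $h\ge0$ and any lattice points $y_1\neq y_2$ in $\mathbb{Z}^d$, $\mathsf{F}^{y_1}_J\cap\mathsf{F}^{y_2}_J=\emptyset$.
   Context: $\widetilde{\mathbb{Z}}^d$ ($d\ge3$) is the metric graph of $\mathbb{Z}^d$ (each nearest-neighbor edge replaced by a compact interval of length $d$), and $\widetilde{\mathcal{L}}_{1/2}$ is the loop soup on it (Poisson point process of continuous loops with intensity $\frac12\widetilde\mu$, $\widetilde\mu$ the Brownian loop measure of Lupu). A fundamental loop is a loop whose range contains at least two lattice points. Connections $\leftrightarrow$ are via continuous paths in the union of ranges of loops of the soup (or nonempty intersection); $\nleftrightarrow$ is the negation; $\mathbf{C}(x)$ is the cluster of $x$. The ghost field: i.i.d. $\{0,1\}$-valued $\mathscr{G}^h_x$, $x\in\mathbb{Z}^d$, independent of the soup, with $\mathbb{P}(\mathscr{G}^h_x=0)=e^{-h}$; $\mathcal{G}^h=\{x:\mathscr{G}^h_x=1\}$. For $x\in\mathbb{Z}^d$, $i\in\mathbb{N}^+$, $x_i^{\pm}=x\pm(i,0,\dots,0)$, and $A_J^x=\bigcup_{i=1}^J\{x_i^+,x_i^-\}\cup\{x\}$. For $A\subset\mathbb{Z}^d$, $\gamma^{\mathrm f}_A$ is the union of ranges of fundamental loops of $\widetilde{\mathcal{L}}_{1/2}$ that visit every point of $A$ and no other lattice point. For distinct $x,y,z$, $\mathsf{E}(x,y,z)$ is the event that (1) $\mathbf{0}\leftrightarrow x$ and $\mathbf{0}\nleftrightarrow\mathcal{G}^h$;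 (2) $y\leftrightarrow\mathcal{G}^h$ and $z\leftrightarrow\mathcal{G}^h$; (3) $\mathbf{C}(x),\mathbf{C}(y),\mathbf{C}(z)$ are pairwise disjoint. $\mathsf{E}^x_J=\mathsf{E}(x,x_J^-,x_J^+)$. $\mathsf{F}^x_J$ is the event that $\gamma^{\mathrm f}_{A_J^x}\neq\emptyset$ and that, after deleting from $\widetilde{\mathcal{L}}_{1/2}$ all loops composing $\gamma^{\mathrm f}_{A_J^x}$, the event $\mathsf{E}^x_J$ occurs. *)

From HB Require Import structures.
From mathcomp Require Import all_boot all_order all_algebra.
From mathcomp Require Import all_classical all_reals all_analysis.
Set Implicit Arguments. Unset Strict Implicit. Unset Printing Implicit Defensive.
Import Order.TTheory GRing.Theory Num.Theory.
Import numFieldNormedType.Exports.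
Local Open Scope classical_set_scope.
Local Open Scope ring_scope.

Section MetricGraph.
Variables (R : realType) (d : nat).

Definition lat := 'I_d -> int.

(* x + k e_1 ; x_i^+ = shift x i, x_i^- = shift x (-i). *)
Definition shift (x : lat) (k : int) : lat :=
  fun j => x j + (if val j == 0%N then k else 0).

Definition Aset (x : lat) (J : nat) : set lat :=
  [set y | exists k : int, (`|k| <= J%:Z)%R /\ y = shift x k].

(* The metric graph \tilde Z^d realised in R^d: edges have Euclidean
   length d; lattice point x sits at d*x. *)
Definition emb (x : lat) : 'rV[R]_d := \row_i (d%:R * (x i)%:~R).

Definition in_dZ (r : R) := exists z : int, r = d%:R * z%:~R.

Definition metric_graph : set 'rV[R]_d :=
  [set v | forall i j : 'I_d, i != j -> in_dZ (v ord0 i) \/ in_dZ (v ord0 j)].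

Record loop := Loop {
  lT : R;
  lT_gt0 : 0 < lT;
  lpath : R -> 'rV[R]_d;
  lcont : {within [set t | 0 <= t <= lT], continuous lpath};
  lclosed : lpath 0 = lpath lT;
  lin_graph : forall t, 0 <= t <= lT -> metric_graph (lpath t) }.

Definition range (l : loop) : set 'rV[R]_d :=
  lpath l @` [set t | 0 <= t <= lT l].

Definition latpts (l : loop) : set lat := [set x | range l (emb x)].

Definition fundamental (l : loop) : Prop :=
  exists x y, x <> y /\ latpts l x /\ latpts l y.

Definition soup_range (I : Type) (L : I -> loop) (K : set I) : set 'rV[R]_d :=
  \bigcup_(i in K) range (L i).

Definition conn (U : set 'rV[R]_d) (a b : 'rV[R]_d) : Prop :=
  a = b \/ exists f : R -> 'rV[R]_d,
    {within [set t | 0 <= t <= 1], continuous f} /\ f 0 = a /\ f 1 = b /\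
    (forall t, 0 <= t <= 1 -> U (f t)).

Definition connG (U : set 'rV[R]_d) (a : 'rV[R]_d) (G : set lat) : Prop :=
  exists g, G g /\ conn U a (emb g).

Definition cluster (U : set 'rV[R]_d) (a : 'rV[R]_d) : set 'rV[R]_d :=
  [set v | conn U a v].

(* The event E(x,y,z) for the configuration with range U and ghost set G. *)
Definition Eevt (U : set 'rV[R]_d) (G : set lat) (x y z : lat) : Prop :=
  [/\ conn U (emb (fun _ => 0)) (emb x) /\ ~ connG U (emb (fun _ => 0)) G,
      connG U (emb y) G /\ connG U (emb z) G &
      [/\ cluster U (emb x) `&` cluster U (emb y) = set0,
          cluster U (emb x) `&` cluster U (emb z) = set0 &
          cluster U (emb y) `&` cluster U (emb z) = set0]].

Definition EJ (U : set 'rV[R]_d) (G : set lat) (x : lat) (J : nat) : Prop :=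
  Eevt U G x (shift x (- J%:Z)) (shift x J%:Z).

Definition composes (I : Type) (L : I -> loop) (A : set lat) : set I :=
  [set i | fundamental (L i) /\ latpts (L i) = A].

Definition gammaf (I : Type) (L : I -> loop) (A : set lat) : set 'rV[R]_d :=
  soup_range L (composes L A).

Definition FJ (I : Type) (L : I -> loop) (G : set lat) (x : lat) (J : nat) : Prop :=
  gammaf L (Aset x J) <> set0 /\
  EJ (soup_range L (~` composes L (Aset x J))) G x J.

End MetricGraph.

(** Write [U_y] for the soup with the loops of [gamma^f_{A^y}] deleted.  A path
  in [U_{y1}] that meets a loop of [gamma^f_{A^{y2}}] reaches [y2], since every
  such loop visits [y2].  Under [F^{y1}_J] the paths in [U_{y1}] from [y1^-] and
  [y1^+] to the ghost set cannot both reach [y2] (their clusters are disjoint),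
  so one of them lies in [U_{y2}]; a loop of [gamma^f_{A^{y1}}] survives in
  [U_{y2}] and joins [y1] to its start.  Hence [y1] is connected to the ghost set
  in [U_{y2}], and symmetrically [y2] in [U_{y1}].  The path from [0] to [y2] in
  [U_{y2}] either lies in [U_{y1}] or reaches [y1]; either way [0] is connected
  to the ghost set in [U_{y1}] or in [U_{y2}], contradicting [F^{y1}_J] or
  [F^{y2}_J]. *)

From Pilot Require Import Defs.
From HB Require Import structures.
From mathcomp Require Import all_boot all_order all_algebra.
From mathcomp Require Import all_classical all_reals all_analysis.
From mathcomp Require Import lra zify.
Import Order.TTheory GRing.Theory Num.Theory.
Import numFieldNormedType.Exports.
Local Open Scope classical_set_scope.
Local Open Scope ring_scope.

Set Implicit Arguments. Unset Strict Implicit. Unset Printing Implicit Defensive.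

Lemma continuous_within_comp {T U W : topologicalType} (A : set T) (B : set U)
    (c : T -> U) (f : U -> W) :
  continuous c -> (forall x, A x -> B (c x)) -> {within B, continuous f} ->
  {within A, continuous (f \o c)}.
Proof.
move=> cc cAB /subspace_continuousP fB; apply/subspace_continuousP => x Ax.
apply: cvg_comp (fB _ (cAB _ Ax)) => P /= /(cc x) cP.
by apply: (filterS (F := nbhs x)) cP => z /= + Az; apply; exact: cAB.
Qed.

Definition clamp (R : realType) (a b t : R) := Num.max a (Num.min b t).

Lemma clamp_continuous (R : realType) (a b : R) : continuous (clamp a b).
Proof.
have -> : clamp a b = cst a \max (cst b \min id) by [].
apply: max_fun_continuous; first exact: cst_continuous.
by apply: min_fun_continuous; [exact: cst_continuous | move=> x; exact: cvg_id].
Qed.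

Lemma clamp_itv (R : realType) (a b t : R) : a <= b -> a <= clamp a b t <= b.
Proof. by move=> ab; rewrite /clamp le_max lexx ge_max ab ge_min lexx. Qed.

Lemma clamp_id (R : realType) (a b t : R) : a <= t <= b -> clamp a b t = t.
Proof. by case/andP=> ta tb; rewrite /clamp min_r // max_r. Qed.

Lemma clamp_le (R : realType) (a b t : R) : a <= b -> t <= a -> clamp a b t = a.
Proof. by move=> ab ta; rewrite /clamp min_r ?max_l // (le_trans ta ab). Qed.

Lemma clamp_ge (R : realType) (a b t : R) : a <= b -> b <= t -> clamp a b t = b.
Proof. by move=> ab bt; rewrite /clamp min_l ?max_r. Qed.

Lemma affine_continuous (R : realType) (k c : R) : continuous (fun s : R => s * k + c).
Proof.
move=> x; apply: (@continuousD _ _ _ (fun s : R => s * k) (cst c)); last exact: cvg_cst.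
by apply: (@continuousM _ _ id (cst k)); [exact: cvg_id | exact: cvg_cst].
Qed.

Section Connection.
Variables (R : realType) (d : nat).
Implicit Types (U V : set 'rV[R]_d) (a b c : 'rV[R]_d).

Lemma conn_along_path U (g : R -> 'rV[R]_d) (s t0 t1 : R) :
  {within [set t | 0 <= t <= s], continuous g} ->
  (forall t, 0 <= t <= s -> U (g t)) -> 0 <= t0 <= s -> 0 <= t1 <= s ->
  conn U (g t0) (g t1).
Proof.
move=> gc gU /andP[t0_ge0 t0_le] /andP[t1_ge0 t1_le].
have into_itv u : 0 <= u <= 1 -> 0 <= u * (t1 - t0) + t0 <= s.
  by case/andP=> *; apply/andP; split; nra.
right; exists (g \o fun u => u * (t1 - t0) + t0); split.
  by apply: continuous_within_comp gc => //; exact: affine_continuous.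
rewrite /= mul0r add0r mul1r subrK; do 2!split=> //.
by move=> u /into_itv /gU.
Qed.

Lemma conn_sym U a b : conn U a b -> conn U b a.
Proof.
case=> [->|[f [fc [<- [<- fU]]]]]; first by left.
by apply: conn_along_path fc fU _ _; rewrite lexx ler01.
Qed.

Lemma conn_trans U a b c : conn U a b -> conn U b c -> conn U a c.
Proof.
case=> [->//|[f [fc [f0 [f1 fU]]]]].
case=> [<-|[g [gc [g0 [g1 gU]]]]]; first by right; exists f.
pose cl := clamp (0 : R) 1.
have cl_id t : 0 <= t <= 1 -> cl t = t by exact: clamp_id.
have cl_le t : t <= 0 -> cl t = 0 by exact: clamp_le.
have cl_ge t : 1 <= t -> cl t = 1 by exact: clamp_ge.
have half_continuous (k : R) (h : R -> 'rV[R]_d) :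
    {within [set t | 0 <= t <= 1], continuous h} ->
    {within [set t | 0 <= t <= 1], continuous (fun s => h (cl (s * 2 + k)))}.
  move=> hc; apply: continuous_within_comp hc => [x | x _]; last exact: clamp_itv.
  exact: continuous_comp (@affine_continuous _ 2 k x) (@clamp_continuous _ 0 1 _).
(* On either half of [0, 1] one of the two clamped summands is frozen at [b]. *)
right; exists (fun s => f (cl (s * 2 + 0)) + g (cl (s * 2 - 1)) - b); split.
  apply: within_continuousB; last exact/continuous_subspaceT/cst_continuous.
  by apply: within_continuousD; exact: half_continuous.
split; first by rewrite !mul0r !add0r cl_id ?cl_le ?lexx ?ler01 ?lerN10 // f0 g0 addrK.
split.
  rewrite !mul1r addr0 cl_ge ?ler1n // cl_id; last by lra.
  by rewrite (_ : 2 - 1 = 1) ?f1 ?g1; [rewrite addrAC subrr add0r | lra].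
move=> s /andP[s0 s1]; have [hs|hs] := leP (s * 2) 1.
  rewrite (cl_le (s * 2 - 1)); last by lra.
  by rewrite g0 addrK cl_id; [apply: fU | ]; lra.
rewrite (cl_ge (s * 2 + 0)); last by lra.
by rewrite f1 addrAC subrr add0r cl_id; [apply: gU | ]; lra.
Qed.

Lemma conn_sub U V a b : U `<=` V -> conn U a b -> conn V a b.
Proof.
move=> UV [->|[f [fc [f0 [f1 fU]]]]]; first by left.
by right; exists f; do 3!split=> //; move=> t /fU; exact: UV.
Qed.

Lemma conn_setU U V a b :
  conn (U `|` V) a b -> conn U a b \/ exists2 p, V p & conn (U `|` V) a p.
Proof.
case=> [->|[f [fc [f0 [f1 fU]]]]]; first by left; left.
have [inU|/existsNP[t /not_implyP[ht notU]]] :=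
  pselect (forall t, 0 <= t <= 1 -> U (f t)); first by left; right; exists f.
right; exists (f t); first by case: (fU t ht).
by rewrite -f0; apply: conn_along_path fc fU _ ht; rewrite lexx ler01.
Qed.

Lemma cluster_disjoint_conn U a b :
  Defs.cluster U a `&` Defs.cluster U b = set0 -> ~ conn U a b.
Proof.
move=> dis ab; suff : (Defs.cluster U a `&` Defs.cluster U b) b by rewrite dis.
by split=> //; left.
Qed.

Lemma conn_connG U a b (G : set (lat d)) : conn U a b -> connG U b G -> connG U a G.
Proof. by move=> ab [g [Gg bg]]; exists g; split=> //; exact: conn_trans bg. Qed.

End Connection.

Section Soup.
Variables (R : realType) (d : nat) (I : Type) (L : I -> loop R d).
Implicit Types (K C : set I) (a b p q : 'rV[R]_d).

Lemma soup_range_sub K K' : K `<=` K' -> soup_range L K `<=` soup_range L K'.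
Proof. by move=> KK' p [i Ki ip]; exists i => //; exact: KK'. Qed.

Lemma conn_loop K i p q :
  K i -> Defs.range (L i) p -> Defs.range (L i) q -> conn (soup_range L K) p q.
Proof.
move=> Ki [t0 t0_in <-] [t1 t1_in <-].
apply: conn_along_path t0_in t1_in; first exact: lcont.
by move=> t t_in; exists i => //; exists t.
Qed.

Lemma conn_soup_avoid K C a b q :
  (forall i, C i -> Defs.range (L i) q) -> conn (soup_range L K) a b ->
  conn (soup_range L (K `\` C)) a b \/ conn (soup_range L K) a q.
Proof.
move=> Cq.
have soupK : soup_range L K = soup_range L (K `\` C) `|` soup_range L (K `&` C).
  by rewrite /soup_range -bigcup_setU setUC setUIDK.
rewrite [in X in X -> _]soupK => /conn_setU[|[p [i [Ki Ci] ip] ap]]; first by left.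
by right; rewrite -soupK in ap; exact: conn_trans ap (conn_loop Ki ip (Cq _ Ci)).
Qed.

End Soup.

Section Lattice.
Variable d : nat.
Implicit Types (x y : lat d) (J : nat).

Lemma shift0 x : Defs.shift x 0 = x.
Proof. by apply: funext => j; rewrite /Defs.shift if_same addr0. Qed.

Lemma Aset_shift x J k : `|k| <= J%:Z -> Aset x J (Defs.shift x k).
Proof. by exists k. Qed.

Lemma Aset_center x J : Aset x J x.
Proof. by rewrite -[x in Aset _ _ x]shift0; apply: Aset_shift; rewrite normr0. Qed.

Lemma Aset_shiftJ x J : Aset x J (Defs.shift x J%:Z).
Proof. exact: Aset_shift. Qed.

Lemma Aset_shiftNJ x J : Aset x J (Defs.shift x (- J%:Z)).
Proof. by apply: Aset_shift; rewrite normrN. Qed.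

(* [y1] and [y1 +- J e_1] all lie in [A_J^{y2}]; comparing first coordinates forces
  [y1 = y2]. *)
Lemma Aset_inj J : (0 < d)%N -> injective (fun x => Aset x J).
Proof.
move=> d_gt0 y1 y2 E; pose i0 : 'I_d := Ordinal d_gt0.
have [k [k_le y1E]] : Aset y2 J y1 by rewrite -E; exact: Aset_center.
have [kp [kp_le ekp]] : Aset y2 J (Defs.shift y1 J%:Z) by rewrite -E; exact: Aset_shiftJ.
have [km [km_le ekm]] : Aset y2 J (Defs.shift y1 (- J%:Z)).
  by rewrite -E; exact: Aset_shiftNJ.
move: ekp ekm => /(congr1 (fun x => x i0)) ekp /(congr1 (fun x => x i0)) ekm.
rewrite y1E /Defs.shift /= in ekp ekm.
move: k_le kp_le km_le; rewrite !ler_norml => /andP[? ?] /andP[? ?] /andP[? ?].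
by rewrite y1E (_ : k = 0) ?shift0 //; lia.
Qed.

End Lattice.

Section Composes.
Variables (R : realType) (d : nat) (I : Type) (L : I -> loop R d).
Implicit Types (A G : set (lat d)) (y : lat d).

Lemma composes_disjoint A1 A2 : A1 <> A2 -> composes L A1 `<=` ~` composes L A2.
Proof. by move=> A12 i [_ iA1] [_ iA2]; apply: A12; rewrite -iA1 -iA2. Qed.

Lemma gammaf_neq0 A : gammaf L A <> set0 -> exists i, composes L A i.
Proof.
move=> ne; apply: contrapT => noi; apply: ne; apply/seteqP; split=> // p [i iA _].
by apply: noi; exists i.
Qed.

Lemma composes_range A i x : composes L A i -> A x -> Defs.range (L i) (emb R x).
Proof. by move=> [_ iA] Ax; have : latpts (L i) x by rewrite iA. Qed.

Lemma FJ_center_connG G J y1 y2 : Aset y1 J <> Aset y2 J ->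
  FJ L G y1 J -> FJ L G y2 J ->
  connG (soup_range L (~` composes L (Aset y2 J))) (emb R y1) G.
Proof.
move=> A12 [/gammaf_neq0[i1 i1A1] [_ [[gm [Gm cm]] [gp [Gp cp]]] [_ _ dis]]] _.
have C2y2 i : composes L (Aset y2 J) i -> Defs.range (L i) (emb R y2).
  by move=> iA2; exact: composes_range iA2 (Aset_center _ _).
have reach z g : Aset y1 J z ->
    conn (soup_range L (~` composes L (Aset y1 J))) (emb R z) (emb R g) ->
    conn (soup_range L (~` composes L (Aset y2 J))) (emb R y1) (emb R g) \/
    conn (soup_range L (~` composes L (Aset y1 J))) (emb R z) (emb R y2).
  move=> Az /(conn_soup_avoid C2y2)[zg|]; last by right.
  left; apply: conn_trans (conn_sub _ zg); last by apply: soup_range_sub => i [].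
  apply: conn_loop (composes_disjoint A12 i1A1) _ (composes_range i1A1 Az).
  exact: composes_range i1A1 (Aset_center _ _).
have [ym_g|ym_y2] := reach _ _ (Aset_shiftNJ _ _) cm; first by exists gm.
have [yp_g|yp_y2] := reach _ _ (Aset_shiftJ _ _) cp; first by exists gp.
by case: (cluster_disjoint_conn dis); exact: conn_trans ym_y2 (conn_sym yp_y2).
Qed.

End Composes.

Theorem lemma9p3 (R : realType) (d : nat) (hd : (3 <= d)%N)
  (J : nat) (hJ : (0 < J)%N) (h : R) (hh : 0 <= h)
  (I : Type) (L : I -> loop R d) (G : set (lat d))
  (y1 y2 : lat d) (hy : y1 <> y2) :
  ~ (FJ L G y1 J /\ FJ L G y2 J).
Proof.
move=> [F1 F2].
have A12 : Aset y1 J <> Aset y2 J.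
  by move=> /(Aset_inj (ltn_trans (isT : (0 < 2)%N) hd)).
have y1G := FJ_center_connG A12 F1 F2.
have y2G := FJ_center_connG (nesym A12) F2 F1.
move: F1 F2 => [_ [[_ no1] _ _]] [_ [[c0y2 no2] _ _]].
have C1y1 i : composes L (Aset y1 J) i -> Defs.range (L i) (emb R y1).
  by move=> iA1; exact: composes_range iA1 (Aset_center _ _).
case: (conn_soup_avoid C1y1 c0y2) => [c0y2_avoid|c0y1].
  apply: no1; apply: conn_connG y2G; apply: conn_sub c0y2_avoid.
  by apply: soup_range_sub => i [].
by apply: no2; exact: conn_connG c0y1 y1G.
Qed.
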